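(* For every family of pointed spaces $\{(X_i,x_i)\}_{i\in I}$, $$\mathcal{H}_\infty\Big(\prod_{i\in I}X_i,x_\ast\Big)\cong\prod_{i\in I}\mathcal{H}_\infty(X_i,x_i),$$ where $x_\ast=(x_i)_{i\in I}\in\prod_{i\in I}X_i$ (product topology).
   Context: For $n\geq1$, $\mathbb{H}^n=\{(r_0,\dots,r_n)\in\mathbb{R}^{n+1} : (r_0-1/k)^2+\sum_{i=1}^n r_i^2=(1/k)^2 \text{ for some } k\in\mathbb{N}\}$ is the $n$-dimensional Hawaiian earring with base point $\theta$ (the origin); $S^n_k$ is its sphere of radius $1/k$. $\mathbb{H}^\infty$ is the weak join of $\{(\mathbb{H}^n,\theta)\}_{n\in\mathbb{N}}$: the disjoint union with all base points identified to $\theta$, where $U$ is open iff $U\cap\mathbb{H}^n$ is open in $\mathbb{H}^n$ for all $n$ and, if $\theta\in U$, then $\mathbb{H}^n\subseteq U$ for all but finitely many $n$. $\mathcal{H}_\infty(X,x_0)$ is the set of pointed homotopy classes (rel $\{\theta\}$) of continuous maps $(\mathbb{H}^\infty,\theta)\to(X,x_0)$, with group operation $[f][g]=[f\ast g]$ where on each sphere $S^n_k\subseteq\mathbb{H}^n$, $(f\ast g)|_{S^n_k}$ is the usual $\pi_n$-concatenation of $f|_{S^n_k}$ and $g|_{S^n_k}$. *)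

From HB Require Import structures.
From mathcomp Require Import all_boot all_order all_algebra.
From mathcomp Require Import all_classical all_reals all_analysis.
From mathcomp Require Import Rstruct Rstruct_topology.
Set Implicit Arguments. Unset Strict Implicit. Unset Printing Implicit Defensive.
Import Order.TTheory GRing.Theory Num.Theory.
Local Open Scope classical_set_scope.
Local Open Scope ring_scope.

Section HawaiianEarrings.
Variable R : realType.

(* Index shift: for n : nat, [amb n] = R^(n+2) is the ambient space of the
   paper's H^(n+1) (paper dimensions m >= 1 correspond to n = m - 1).
   Coordinate ord0 is the paper's r_0. *)
Definition amb (n : nat) := 'I_n.+2 -> R.

Definition onSphere n (k : nat) (x : amb n) : Prop :=
  (x ord0 - k%:R^-1) ^+ 2 + \sum_(i < n.+2 | i != ord0) (x i) ^+ 2 = (k%:R^-1) ^+ 2.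
Definition inH n (x : amb n) : Prop := exists2 k : nat, (0 < k)%N & onSphere k x.

Definition origin n : amb n := fun=> 0.

Definition dist2 n (x y : amb n) : R := \sum_i (x i - y i) ^+ 2.

(* Points of H^infty other than the base point: a dimension index together
   with a non-origin point of that Hawaiian earring (disjoint union). *)
Definition Hpts := {p : {n : nat & amb n} | inH (projT2 p) /\ projT2 p <> @origin (projT1 p)}.

(* H^infty: the disjoint union with all base points identified to theta = None *)
Definition Hinf := option Hpts.
HB.instance Definition _ := gen_eqMixin Hinf.
HB.instance Definition _ := gen_choiceMixin Hinf.

Definition theta : Hinf := None.

Definition emb n (x : amb n) : Hinf :=
  match pselect (inH x /\ x <> @origin n) with
  | left h => Some (exist _ (existT _ n x) h)
  | right _ => None
  end.

(* Weak join topology: U is open iff each U /\ H^(n+1) is open in H^(n+1)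
   (Euclidean subspace topology), and if theta in U then U contains all but
   finitely many H^(n+1). *)
Definition Hopen (U : set Hinf) : Prop :=
  (forall n (x : amb n), inH x -> U (emb x) ->
     exists2 e : R, 0 < e & forall y : amb n, inH y -> dist2 x y < e -> U (emb y))
  /\ (U theta -> exists N : nat, forall n, (N <= n)%N ->
        forall x : amb n, inH x -> U (emb x)).

Lemma Hopen_setT : Hopen setT.
Proof. by split=> [n x _ _|_]; [exists 1 | exists 0%N]. Qed.

Lemma Hopen_setI : setI_closed Hopen.
Proof.
move=> U V [U1 U2] [V1 V2]; split.
  move=> n x hx [Ux Vx].
  have [e1 e10 He1] := U1 _ _ hx Ux; have [e2 e20 He2] := V1 _ _ hx Vx.
  exists (Num.min e1 e2); first by rewrite lt_min e10 e20.
  by move=> y hy; rewrite lt_min => /andP[h1 h2]; split; [exact: He1|exact: He2].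
move=> [Ut Vt]; have [N1 HN1] := U2 Ut; have [N2 HN2] := V2 Vt.
exists (maxn N1 N2) => n; rewrite geq_max => /andP[h1 h2] x hx.
by split; [exact: HN1|exact: HN2].
Qed.

Lemma Hopen_bigU (J : Type) (f : J -> set Hinf) :
  (forall j, Hopen (f j)) -> Hopen (\bigcup_j f j).
Proof.
move=> Hf; split.
  move=> n x hx [j _ fjx]; have [e e0 He] := (Hf j).1 _ _ hx fjx.
  by exists e => // y hy hxy; exists j => //; exact: He.
move=> [j _ fjt]; have [N HN] := (Hf j).2 fjt.
by exists N => n hn y hy; exists j => //; exact: HN.
Qed.

HB.instance Definition _ :=
  isOpenTopological.Build Hinf Hopen_setT Hopen_setI Hopen_bigU.

(* Parametrization of the sphere S_k of H^(n+1) by the cube I^(n+1), sending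
   the boundary of the cube to theta and identifying I^(n+1)/boundary with
   S_k:  u = 2t - 1 in [-1,1]^(n+1),  s = sup-norm of u,  v = u/|u|_2,
   point = (1/k) * (1 + cos(pi s), sin(pi s) v). *)
Definition unitI n (t : 'I_n.+1 -> R) : Prop := forall i, 0 <= t i <= 1.

Definition sph n (k : nat) (t : 'I_n.+1 -> R) : amb n :=
  let u := fun i => 2 * t i - 1 in
  let s := \big[Num.max/0]_i `|u i| in
  let r := Num.sqrt (\sum_i u i ^+ 2) in
  fun j => if unlift ord0 j is Some j'
           then sin (pi * s) * (u j' / r) / k%:R
           else (1 + cos (pi * s)) / k%:R.

Definition upd0 n (t : 'I_n.+1 -> R) (a : R) : 'I_n.+1 -> R :=
  fun i => if i == ord0 then a else t i.

(* h = f * g : on every sphere S_k^(n+1), h is the usual pi_(n+1)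
   concatenation (along the first cube coordinate) of f and g. *)
Definition concat (X : topologicalType) (f g h : Hinf -> X) : Prop :=
  forall n (k : nat) (t : 'I_n.+1 -> R), (0 < k)%N -> unitI t ->
    h (emb (sph k t)) =
      if t ord0 <= 2^-1 then f (emb (sph k (upd0 t (2 * t ord0))))
      else g (emb (sph k (upd0 t (2 * t ord0 - 1)))).

Definition based (X : topologicalType) (x0 : X) (f : Hinf -> X) : Prop :=
  continuous f /\ f theta = x0.

Definition homotopic (X : topologicalType) (x0 : X) (f g : Hinf -> X) : Prop :=
  exists H : Hinf * R -> X,
    [/\ {within [set p | 0 <= p.2 <= 1], continuous H},
        forall p, H (p, 0) = f p,
        forall p, H (p, 1) = g p &
        forall s, 0 <= s <= 1 -> H (theta, s) = x0].

End HawaiianEarrings.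

From HB Require Import structures.
From mathcomp Require Import all_boot all_order all_algebra.
From mathcomp Require Import all_classical all_reals all_analysis.
From mathcomp Require Import Rstruct Rstruct_topology.
From mathcomp Require Import ring lra.
Set Implicit Arguments. Unset Strict Implicit. Unset Printing Implicit Defensive.
Import Order.TTheory GRing.Theory Num.Theory.
Import numFieldNormedType.Exports.
Local Open Scope classical_set_scope.
Local Open Scope ring_scope.

(* Projecting to the factors identifies based maps [H^oo -> prod_i X_i], and homotopies
   rel [theta] between them, with families of based maps and homotopies into the [X_i].
   What needs work is that the concatenation [f * g] of based maps is again continuous.
   Each sphere [S_k] of [H^(n+1)] is the image of the cube under [sph], which has a
   continuous inverse away from [theta], and points of [H^(n+1)] close to a point of
   [S_k \ theta] lie on [S_k]; this gives continuity off [theta].  Near [theta], either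
   half of the concatenation at most quadruples the squared distance to the origin, so
   continuity at [theta] is inherited from [f] and [g]. *)

Section real_cvg.
Context {R : realType} {T : Type} (F : set_system T) {FF : Filter F}.

Lemma cvg0_mul_bounded (a b : T -> R) : a @ F --> 0 -> (forall t, `|b t| <= 1) ->
  (fun t => a t * b t) @ F --> 0.
Proof.
move=> /cvgrPdist_lt a0 b1; apply/cvgrPdist_lt => e /a0; apply: filterS => t.
by rewrite !sub0r !normrN normrM; apply: le_lt_trans; rewrite ler_piMr.
Qed.

Lemma cvgr_sum (I : Type) (r : seq I) (G : I -> T -> R) (g : I -> R) :
  (forall i, G i @ F --> g i) ->
  (fun t => \sum_(i <- r) G i t) @ F --> \sum_(i <- r) g i.
Proof.
move=> hG; elim: r => [|i r IH].
  by rewrite big_nil; under eq_fun do rewrite big_nil; exact: cvg_cst.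
by rewrite big_cons; under eq_fun do rewrite big_cons; exact: cvgD.
Qed.

Lemma cvgr_max (a b : T -> R) (a0 b0 : R) : a @ F --> a0 -> b @ F --> b0 ->
  (fun t => Num.max (a t) (b t)) @ F --> Num.max a0 b0.
Proof.
move=> ha hb; rewrite maxr_absE; under eq_fun do rewrite maxr_absE.
apply: cvgM; last exact: cvg_cst.
by apply: cvgD; [apply: cvgD|apply: cvg_norm; apply: cvgB].
Qed.

Lemma cvgr_bigmax (I : Type) (r : seq I) (G : I -> T -> R) (g : I -> R) :
  (forall i, G i @ F --> g i) ->
  (fun t => \big[Num.max/0]_(i <- r) G i t) @ F --> \big[Num.max/0]_(i <- r) g i.
Proof.
move=> hG; elim: r => [|i r IH].
  by rewrite big_nil; under eq_fun do rewrite big_nil; exact: cvg_cst.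
by rewrite big_cons; under eq_fun do rewrite big_cons; exact: cvgr_max.
Qed.

End real_cvg.

Section sum_sqr.
Context {R : realType} (I : finType).

Lemma sum_sqr_ge0 (G : I -> R) : 0 <= \sum_i G i ^+ 2.
Proof. by apply: sumr_ge0 => i _; exact: sqr_ge0. Qed.

Lemma sum_sqr_eq0 (G : I -> R) : \sum_i G i ^+ 2 = 0 -> forall i, G i = 0.
Proof.
move=> S0 i; apply/eqP; rewrite -sqrf_eq0; apply/eqP.
exact: (psumr_eq0P (fun j _ => sqr_ge0 (G j)) S0).
Qed.

Lemma sum_sqr_gt0 (G : I -> R) : G <> (fun=> 0) -> 0 < \sum_i G i ^+ 2.
Proof.
move=> G0; rewrite lt_def sum_sqr_ge0 andbT; apply/eqP => /sum_sqr_eq0 S0.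
by apply: G0; apply: funext.
Qed.

End sum_sqr.

Section sphere_parametrization.
Context {R : realType}.
Implicit Types (n k : nat).

Definition cube_supnorm n (t : 'I_n.+1 -> R) := \big[Num.max/0]_i `|2 * t i - 1|.
Definition cube_norm n (t : 'I_n.+1 -> R) := Num.sqrt (\sum_i (2 * t i - 1) ^+ 2).

Lemma pnatr_neq0 k : (0 < k)%N -> (k%:R : R) != 0.
Proof. by move=> k0; rewrite pnatr_eq0 -lt0n. Qed.

Lemma sum_neq_ord0 n (G : 'I_n.+2 -> R) :
  \sum_(i < n.+2 | i != ord0) G i = \sum_(j < n.+1) G (lift ord0 j).
Proof. by rewrite big_mkcond big_ord_recl eqxx /= add0r. Qed.

Lemma sph_ord0 n k (t : 'I_n.+1 -> R) :
  sph k t ord0 = (1 + cos (pi * cube_supnorm t)) / k%:R.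
Proof. by rewrite /sph /= unlift_none. Qed.

Lemma sph_lift n k (t : 'I_n.+1 -> R) j :
  sph k t (lift ord0 j) = sin (pi * cube_supnorm t) * ((2 * t j - 1) / cube_norm t) / k%:R.
Proof. by rewrite /sph /= liftK. Qed.

Lemma cube_supnorm_ge0 n (t : 'I_n.+1 -> R) : 0 <= cube_supnorm t.
Proof. by apply: (big_ind (fun v => 0 <= v)) => // a b ha hb; rewrite le_max ha. Qed.

Lemma le_cube_supnorm n (t : 'I_n.+1 -> R) i : `|2 * t i - 1| <= cube_supnorm t.
Proof. exact: (le_bigmax 0 (fun i => `|2 * t i - 1|) i). Qed.

Lemma cube_supnorm_le1 n (t : 'I_n.+1 -> R) : unitI t -> cube_supnorm t <= 1.
Proof.
move=> ut; apply: bigmax_le => // i _.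
by have /andP[? ?] := ut i; rewrite ler_norml; apply/andP; split; lra.
Qed.

Lemma cube_supnorm_eq0 n (t : 'I_n.+1 -> R) :
  \sum_i (2 * t i - 1) ^+ 2 = 0 -> cube_supnorm t = 0.
Proof.
move=> /sum_sqr_eq0 u0; apply/eqP; rewrite eq_le cube_supnorm_ge0 andbT.
by apply: bigmax_le => // i _; rewrite u0 normr0.
Qed.

Lemma sph_tail_norm2 n k (t : 'I_n.+1 -> R) :
  \sum_j sph k t (lift ord0 j) ^+ 2 = (sin (pi * cube_supnorm t) / k%:R) ^+ 2.
Proof.
under eq_bigr do rewrite sph_lift mulrAC exprMn.
rewrite -mulr_sumr; have [S0|S0] := eqVneq (\sum_i (2 * t i - 1) ^+ 2) 0.
  by rewrite cube_supnorm_eq0 // mulr0 sin0 !mul0r expr0n /= !mul0r.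
under eq_bigr do rewrite expr_div_n.
rewrite -mulr_suml /cube_norm sqr_sqrtr ?divff ?mulr1 //.
exact: sum_sqr_ge0.
Qed.

Lemma sph_onSphere n k (t : 'I_n.+1 -> R) : (0 < k)%N -> onSphere k (sph k t).
Proof.
move=> k0; have := pnatr_neq0 k0; have := cos2Dsin2 (pi * cube_supnorm t).
rewrite /onSphere sum_neq_ord0 sph_tail_norm2 sph_ord0.
rewrite !expr_div_n; set c := cos _; set s := sin _ => cs kn.
have -> : s ^+ 2 = 1 - c ^+ 2 by rewrite -cs; ring.
by field.
Qed.

Lemma sph_inH n k (t : 'I_n.+1 -> R) : (0 < k)%N -> inH (sph k t).
Proof. by move=> k0; exists k => //; exact: sph_onSphere. Qed.

Lemma dist2_origin_sph n k (t : 'I_n.+1 -> R) : (0 < k)%N ->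
  dist2 (@origin R n) (sph k t) = 2 * (1 + cos (pi * cube_supnorm t)) / k%:R ^+ 2.
Proof.
move=> k0; have := pnatr_neq0 k0; have := cos2Dsin2 (pi * cube_supnorm t).
rewrite /dist2 big_ord_recl; under eq_bigr do rewrite sub0r sqrrN.
rewrite sub0r sqrrN sph_tail_norm2 sph_ord0.
rewrite !expr_div_n; set c := cos _; set s := sin _ => cs kn.
have -> : s ^+ 2 = 1 - c ^+ 2 by rewrite -cs; ring.
by field.
Qed.

Lemma sph_origin n k (t : 'I_n.+1 -> R) : cube_supnorm t = 1 -> sph k t = @origin R n.
Proof.
move=> s1; apply: funext => i; rewrite /origin.
case: (unliftP ord0 i) => [j|] ->.
  by rewrite sph_lift s1 mulr1 sinpi !mul0r.
by rewrite sph_ord0 s1 mulr1 cospi subrr mul0r.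
Qed.

Lemma sph_cube_corner n k : sph k (fun _ : 'I_n.+1 => 0 : R) = @origin R n.
Proof.
apply: sph_origin; apply/eqP; rewrite eq_le; apply/andP; split.
  by apply: bigmax_le => // i _; rewrite mulr0 sub0r normrN normr1.
have := le_cube_supnorm (fun _ : 'I_n.+1 => 0 : R) ord0.
by rewrite mulr0 sub0r normrN normr1.
Qed.

Lemma unitI_upd0 n (t : 'I_n.+1 -> R) a : unitI t -> 0 <= a <= 1 -> unitI (upd0 t a).
Proof. by move=> ut ha i; rewrite /upd0; case: ifP. Qed.

Lemma sph_upd0_face n k (t : 'I_n.+1 -> R) a : unitI t -> (a = 0 \/ a = 1) ->
  sph k (upd0 t a) = @origin R n.
Proof.
move=> ut a01; have ua : 0 <= a <= 1 by case: a01 => ->; rewrite ?lexx ?ler01.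
apply/sph_origin/eqP; rewrite eq_le cube_supnorm_le1 /=; last exact: unitI_upd0.
have := le_cube_supnorm (upd0 t a) ord0; rewrite /upd0 eqxx.
case: a01 => ->; first by rewrite mulr0 sub0r normrN normr1.
by rewrite mulr1 (_ : 2 - 1 = 1 :> R) ?normr1 //; lra.
Qed.

(* Near [s = 1], [1 + cos (pi s)] is of order [(1 - s)^2]; the hypothesis says that
   [1 - s'] is at most twice [1 - s]. *)
Lemma ler_1Dcos_double (s s' : R) : 0 <= s <= 1 -> 0 <= s' <= 1 -> 2 * s - 1 <= s' ->
  1 + cos (pi * s') <= 4 * (1 + cos (pi * s)).
Proof.
move=> hs hs' hss.
have c1 := cos_le1 (pi * s'); have cN1 := cos_geN1 (pi * s).
have [sh|sh] := leP s (2^-1).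
  have : 0 <= cos (pi * s).
    apply: cos_ge0_pihalf; case/andP: hs => s0 s1; apply/andP; split.
      apply: le_trans (_ : 0 <= _); first by rewrite oppr_le0 divr_ge0 ?pi_ge0.
      by rewrite mulr_ge0 ?pi_ge0.
    by rewrite ler_pM2l ?pi_gt0 // (le_trans sh) // invf_le1 // ler1n.
  by move=> c0; lra.
have pi_itv (u : R) : 0 <= u <= 1 -> pi * u \in `[0, pi].
  move=> /andP[u0 u1]; rewrite in_itv /= mulr_ge0 ?pi_ge0 //=.
  by rewrite ler_piMr // pi_ge0.
have h2 : 0 <= 2 * s - 1 <= 1 by case/andP: hs => s0 s1; apply/andP; split; lra.
have : cos (pi * s') <= cos (pi * (2 * s - 1)).
  rewrite leNgt (ltr_cos (pi_itv _ hs') (pi_itv _ h2)) -leNgt.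
  by rewrite ler_pM2l // pi_gt0.
have -> : pi * (2 * s - 1) = (pi * s) *+ 2 - pi by rewrite mulrBr mulr1 mulrCA mulr_natl.
rewrite cosB cospi sinpi mulr0 addr0 cos_mulr2n mulrN1 -mulr_natl.
move=> h; have := sqr_ge0 (1 + cos (pi * s)); nra.
Qed.

Lemma cube_supnorm_upd0 n (t : 'I_n.+1 -> R) (a : R) : unitI t ->
  2 * `|2 * t ord0 - 1| - 1 <= `|2 * a - 1| ->
  2 * cube_supnorm t - 1 <= cube_supnorm (upd0 t a).
Proof.
move=> ut ha.
suff : cube_supnorm t <= (cube_supnorm (upd0 t a) + 1) / 2 by lra.
apply: bigmax_le => [|i _].
  by apply: divr_ge0 => //; have := cube_supnorm_ge0 (upd0 t a); lra.
have := le_cube_supnorm (upd0 t a) i; rewrite /upd0.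
have [->|ni] := eqVneq i ord0; first by lra.
have /andP[? ?] := ut i; have : `|2 * t i - 1| <= 1.
  by rewrite ler_norml; apply/andP; split; lra.
lra.
Qed.

Lemma dist2_origin_sph_upd0 n k (t : 'I_n.+1 -> R) a :
  (0 < k)%N -> unitI t -> 0 <= a <= 1 ->
  2 * `|2 * t ord0 - 1| - 1 <= `|2 * a - 1| ->
  dist2 (@origin R n) (sph k (upd0 t a)) <= 4 * dist2 (@origin R n) (sph k t).
Proof.
move=> k0 ut ha hest; rewrite !dist2_origin_sph //.
have := @ler_1Dcos_double (cube_supnorm t) (cube_supnorm (upd0 t a)).
rewrite cube_supnorm_ge0 cube_supnorm_le1 // cube_supnorm_ge0 cube_supnorm_le1;
  last exact: unitI_upd0.
move=> /(_ isT isT (cube_supnorm_upd0 ut hest)) h.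
have kp : 0 < (k%:R : R) ^+ 2 by rewrite exprn_gt0 // ltr0n.
rewrite mulrA (mulrC 4) -!mulrA ler_pM2l // !mulrA ler_pM2r ?invr_gt0 //; lra.
Qed.

Lemma dist2_origin_concat_left n k (t : 'I_n.+1 -> R) :
  (0 < k)%N -> unitI t -> t ord0 <= 2^-1 ->
  dist2 (@origin R n) (sph k (upd0 t (2 * t ord0))) <= 4 * dist2 (@origin R n) (sph k t).
Proof.
move=> k0 ut ht; have /andP[? ?] := ut ord0.
apply: dist2_origin_sph_upd0 => //; first by apply/andP; split; lra.
rewrite (ler0_norm (x := 2 * t ord0 - 1)); last by lra.
by rewrite -normrN; apply: le_trans (ler_norm _); lra.
Qed.

Lemma dist2_origin_concat_right n k (t : 'I_n.+1 -> R) :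
  (0 < k)%N -> unitI t -> 2^-1 <= t ord0 ->
  dist2 (@origin R n) (sph k (upd0 t (2 * t ord0 - 1))) <=
  4 * dist2 (@origin R n) (sph k t).
Proof.
move=> k0 ut ht; have /andP[? ?] := ut ord0.
apply: dist2_origin_sph_upd0 => //; first by apply/andP; split; lra.
rewrite (ger0_norm (x := 2 * t ord0 - 1)); last by lra.
by apply: le_trans (ler_norm _); lra.
Qed.

End sphere_parametrization.

Section sphere_inverse.
Context {R : realType}.
Implicit Types (n k : nat).

(* [acos] is junk outside [[-1, 1]]; clamping keeps [sphere_level] continuous at
   points off the spheres. *)
Definition clamp (z : R) := Num.min 1 (Num.max (-1) z).

Lemma clampE (z : R) : -1 <= z <= 1 -> clamp z = z.
Proof. by move=> /andP[z1 z2]; rewrite /clamp max_r // min_r. Qed.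

Definition tail_supnorm n (y : amb R n) := \big[Num.max/0]_j `|y (lift ord0 j)|.
Definition tail_norm2 n (y : amb R n) := \sum_j y (lift ord0 j) ^+ 2.

(* On the sphere [S_k], [sphere_cos k y = cos (pi s)] where [s] is the sup-norm
   level of any cube point sent to [y]. *)
Definition sphere_cos n k (y : amb R n) := k%:R * y ord0 - 1.
Definition sphere_level n k (y : amb R n) := acos (clamp (sphere_cos k y)) / pi.

Definition sph_inv n k (y : amb R n) : 'I_n.+1 -> R :=
  fun j => (1 + sphere_level k y * (y (lift ord0 j) / tail_supnorm y)) / 2.

Lemma tail_norm2_ge0 n (y : amb R n) : 0 <= tail_norm2 y.
Proof. exact: sum_sqr_ge0. Qed.

Lemma tail_supnorm_ge0 n (y : amb R n) : 0 <= tail_supnorm y.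
Proof. by apply: (big_ind (fun v => 0 <= v)) => // a b ha hb; rewrite le_max ha. Qed.

Lemma le_tail_supnorm n (y : amb R n) j : `|y (lift ord0 j)| <= tail_supnorm y.
Proof. exact: (le_bigmax 0 (fun j => `|y (lift ord0 j)|) j). Qed.

Lemma tail_ratio_le1 n (y : amb R n) j : `|y (lift ord0 j) / tail_supnorm y| <= 1.
Proof.
have [m0|m0] := eqVneq (tail_supnorm y) 0; first by rewrite m0 invr0 mulr0 normr0.
have mp : 0 < tail_supnorm y by rewrite lt_def m0 tail_supnorm_ge0.
rewrite normrM (gtr0_norm (x := (tail_supnorm y)^-1)) ?invr_gt0 //.
by rewrite ler_pdivrMr // mul1r le_tail_supnorm.
Qed.

Lemma tail_supnorm0 n (y : amb R n) j : tail_supnorm y = 0 -> y (lift ord0 j) = 0.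
Proof.
move=> m0; have := le_tail_supnorm y j; rewrite m0 => h.
by apply/eqP; rewrite -normr_eq0 eq_le h normr_ge0.
Qed.

Lemma tail_norm2_eq0 n (y : amb R n) : tail_norm2 y = 0 -> tail_supnorm y = 0.
Proof.
move=> /sum_sqr_eq0 y0; apply/eqP; rewrite eq_le tail_supnorm_ge0 andbT.
by apply: bigmax_le => // j _; rewrite y0 normr0.
Qed.

Lemma origin_eq n (y : amb R n) : y ord0 = 0 -> tail_supnorm y = 0 -> y = @origin R n.
Proof.
move=> y0 m0; apply: funext => i; rewrite /origin.
by case: (unliftP ord0 i) => [j|] ->; [exact: tail_supnorm0|].
Qed.

Lemma onSphereE n k (y : amb R n) : (0 < k)%N -> onSphere k y ->
  sphere_cos k y ^+ 2 + k%:R ^+ 2 * tail_norm2 y = 1.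
Proof.
move=> k0; have kn := pnatr_neq0 (R := R) k0.
rewrite /onSphere sum_neq_ord0 /sphere_cos /tail_norm2 => h.
have -> : (k%:R * y ord0 - 1) ^+ 2 = k%:R ^+ 2 * (y ord0 - k%:R^-1) ^+ 2 by field.
by rewrite -mulrDr h; field.
Qed.

Lemma sphere_cos_itv n k (y : amb R n) : (0 < k)%N -> onSphere k y ->
  -1 <= sphere_cos k y <= 1.
Proof.
move=> k0 hs; have := onSphereE k0 hs; have := tail_norm2_ge0 y.
have : 0 <= (k%:R : R) ^+ 2 by exact: sqr_ge0.
set z := sphere_cos k y => h1 h2 h3.
have : z ^+ 2 <= 1 by nra.
by move=> h; apply/andP; split; nra.
Qed.

Lemma sphere_level_itv n k (y : amb R n) : (0 < k)%N -> onSphere k y ->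
  0 <= sphere_level k y <= 1.
Proof.
move=> k0 hs; rewrite /sphere_level clampE ?sphere_cos_itv //.
rewrite divr_ge0 ?acos_ge0 ?pi_ge0 ?sphere_cos_itv //=.
by rewrite ler_pdivrMr ?pi_gt0 // mul1r acos_lepi ?sphere_cos_itv.
Qed.

Lemma sph_inv_cube n k (y : amb R n) j :
  2 * sph_inv k y j - 1 = sphere_level k y * (y (lift ord0 j) / tail_supnorm y).
Proof. by rewrite /sph_inv; set a := sphere_level k y * _; field. Qed.

Lemma unitI_sph_inv n k (y : amb R n) : (0 < k)%N -> onSphere k y -> unitI (sph_inv k y).
Proof.
move=> k0 hs j; have /andP[a0 a1] := sphere_level_itv k0 hs.
have : `|2 * sph_inv k y j - 1| <= 1.
  by rewrite sph_inv_cube normrM ger0_norm // -(mul1r 1) ler_pM ?tail_ratio_le1.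
by rewrite ler_norml => /andP[h1 h2]; apply/andP; split; lra.
Qed.

Lemma bigmax_pMl (I : Type) (r : seq I) (c : R) (G : I -> R) : 0 <= c ->
  \big[Num.max/0]_(i <- r) (c * G i) = c * \big[Num.max/0]_(i <- r) G i.
Proof.
move=> c0; elim: r => [|i r IH]; first by rewrite !big_nil mulr0.
by rewrite !big_cons IH maxr_pMr.
Qed.

Lemma sphere_cos_tail0 n k (y : amb R n) : (0 < k)%N -> onSphere k y ->
  y <> @origin R n -> tail_supnorm y = 0 -> sphere_cos k y = 1.
Proof.
move=> k0 hs hy m0; have := onSphereE k0 hs.
have -> : tail_norm2 y = 0.
  by rewrite /tail_norm2 big1 // => j _; rewrite tail_supnorm0 // expr0n.
rewrite mulr0 addr0 => /eqP; rewrite sqrf_eq1 => /orP[/eqP//|/eqP h].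
have : (k%:R : R) * y ord0 = 0 by move: h; rewrite /sphere_cos; lra.
move=> /eqP; rewrite mulf_eq0 (negPf (pnatr_neq0 k0)) /= => /eqP y0.
by case: hy; exact: origin_eq.
Qed.

Lemma sphere_level_tail0 n k (y : amb R n) : (0 < k)%N -> onSphere k y ->
  y <> @origin R n -> tail_supnorm y = 0 -> sphere_level k y = 0.
Proof.
move=> k0 hs hy m0; rewrite /sphere_level sphere_cos_tail0 // clampE.
  by rewrite acos1 mul0r.
by apply/andP; split; lra.
Qed.

Lemma cube_supnorm_sph_inv n k (y : amb R n) : (0 < k)%N -> onSphere k y ->
  y <> @origin R n -> cube_supnorm (sph_inv k y) = sphere_level k y.
Proof.
move=> k0 hs hy; rewrite /cube_supnorm.
under eq_bigr do rewrite sph_inv_cube.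
have /andP[a0 _] := sphere_level_itv k0 hs.
have [m0|m0] := eqVneq (tail_supnorm y) 0.
  rewrite sphere_level_tail0 //; under eq_bigr do rewrite mul0r normr0.
  by rewrite big1_idem //= maxxx.
have mp : 0 < tail_supnorm y by rewrite lt_def m0 tail_supnorm_ge0.
have termE j : `|sphere_level k y * (y (lift ord0 j) / tail_supnorm y)| =
    sphere_level k y / tail_supnorm y * `|y (lift ord0 j)|.
  rewrite normrM (ger0_norm a0) normrM (gtr0_norm (x := (tail_supnorm y)^-1)) ?invr_gt0 //.
  by rewrite [_ * _^-1]mulrC mulrA.
under eq_bigr do rewrite termE.
rewrite bigmax_pMl; last exact: divr_ge0 a0 (tail_supnorm_ge0 y).
by rewrite -/(tail_supnorm y) divfK.
Qed.

Lemma cube_norm_sph_inv n k (y : amb R n) : (0 < k)%N -> onSphere k y ->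
  cube_norm (sph_inv k y) = sphere_level k y / tail_supnorm y * Num.sqrt (tail_norm2 y).
Proof.
move=> k0 hs; have /andP[a0 _] := sphere_level_itv k0 hs.
set c := sphere_level k y / tail_supnorm y.
have c0 : 0 <= c by rewrite divr_ge0 ?tail_supnorm_ge0.
rewrite /cube_norm (eq_bigr (fun j => (c * y (lift ord0 j)) ^+ 2)).
  under eq_bigr do rewrite exprMn.
  by rewrite -mulr_sumr sqrtrM ?sqr_ge0 // sqrtr_sqr ger0_norm.
by move=> j _; rewrite sph_inv_cube mulrA mulrAC.
Qed.

Lemma sph_invK n k (y : amb R n) : (0 < k)%N -> onSphere k y -> y <> @origin R n ->
  sph k (sph_inv k y) = y.
Proof.
move=> k0 hs hy; have kn := pnatr_neq0 (R := R) k0.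
have hz := sphere_cos_itv k0 hs.
have levelE : pi * sphere_level k y = acos (sphere_cos k y).
  by rewrite /sphere_level clampE // mulrC divfK // gt_eqF ?pi_gt0.
apply: funext => i; case: (unliftP ord0 i) => [j|] ->; last first.
  rewrite sph_ord0 cube_supnorm_sph_inv // levelE acosK ?in_itv //=.
  by rewrite /sphere_cos; field.
rewrite sph_lift cube_supnorm_sph_inv // levelE.
have [m0|m0] := eqVneq (tail_supnorm y) 0.
  by rewrite sphere_cos_tail0 // acos1 sin0 !mul0r tail_supnorm0.
have mp : 0 < tail_supnorm y by rewrite lt_def m0 tail_supnorm_ge0.
have rp : 0 < tail_norm2 y.
  by rewrite lt_def tail_norm2_ge0 andbT; apply: contra m0 => /eqP /tail_norm2_eq0 ->.
have hse := onSphereE k0 hs.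
have ap : 0 < sphere_level k y.
  rewrite /sphere_level clampE // divr_gt0 ?pi_gt0 // acos_gt0 //.
  have : 0 < (k%:R : R) ^+ 2 * tail_norm2 y by rewrite mulr_gt0 // exprn_gt0 // ltr0n.
  by case/andP: hz => -> _ h; rewrite /=; nra.
rewrite sin_acos // (_ : 1 - sphere_cos k y ^+ 2 = k%:R ^+ 2 * tail_norm2 y); last by lra.
rewrite sqrtrM ?sqr_ge0 // sqrtr_sqr (ger0_norm (ler0n _ _)).
rewrite cube_norm_sph_inv // sph_inv_cube; field.
by rewrite kn m0 (gt_eqF ap) gt_eqF // sqrtr_gt0.
Qed.

Lemma sphere_cos_gtN1 n k (y : amb R n) : (0 < k)%N -> onSphere k y -> y <> @origin R n ->
  -1 < sphere_cos k y.
Proof.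
move=> k0 hs hy; have /andP[h1 _] := sphere_cos_itv k0 hs.
have kn := pnatr_neq0 (R := R) k0.
rewrite lt_neqAle h1 andbT; apply/eqP => hz.
have := onSphereE k0 hs; rewrite -hz expr2 mulN1r opprK => h.
apply: hy; apply: origin_eq; last first.
  apply: tail_norm2_eq0; have : (k%:R : R) ^+ 2 * tail_norm2 y = 0 by lra.
  by move/eqP; rewrite mulf_eq0 expf_eq0 (negPf kn) andbF /= => /eqP.
have : (k%:R : R) * y ord0 = 0 by move: hz; rewrite /sphere_cos; lra.
by move/eqP; rewrite mulf_eq0 (negPf kn) /= => /eqP.
Qed.

Lemma emb_origin n : emb (@origin R n) = theta R.
Proof. by rewrite /emb; case: (pselect _) => // -[]. Qed.

Lemma emb_sph_surj (p : Hinf R) : exists n k (t : 'I_n.+1 -> R),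
  [/\ (0 < k)%N, unitI t & p = emb (sph k t)].
Proof.
case: p => [[[n y] [yH y0]]|]; last first.
  exists 0%N, 1%N, (fun _ => 0); split => //; first by move=> i; rewrite lexx ler01.
  by rewrite sph_cube_corner emb_origin.
have [k k0 hs] := yH.
exists n, k, (sph_inv k y); split; first exact: k0; first exact: unitI_sph_inv.
rewrite sph_invK //= /emb; case: pselect => [h|[]]; last by split.
by rewrite (Prop_irrelevance h (conj yH y0)).
Qed.

End sphere_inverse.

Section coordinatewise_cvg.
Context {R : realType} {T : Type} (F : set_system T) {FF : Filter F}.

Definition coord_cvg m (W : T -> 'I_m -> R) (w : 'I_m -> R) :=
  forall j, (fun t => W t j) @ F --> w j.

Lemma cvg_cube_supnorm n (W : T -> 'I_n.+1 -> R) w : coord_cvg W w ->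
  (fun t => cube_supnorm (W t)) @ F --> cube_supnorm w.
Proof.
move=> hW; apply: cvgr_bigmax => i; apply: cvg_norm.
by apply: cvgB; [apply: cvgM => //; exact: cvg_cst|exact: cvg_cst].
Qed.

Lemma cvg_sum_sqr m (W : T -> 'I_m -> R) w : coord_cvg W w ->
  (fun t => \sum_i W t i ^+ 2) @ F --> \sum_i w i ^+ 2.
Proof.
move=> hW; apply: cvgr_sum => i; rewrite expr2; under eq_fun do rewrite expr2.
exact: cvgM.
Qed.

Lemma cvg_cube_norm n (W : T -> 'I_n.+1 -> R) w : coord_cvg W w ->
  (fun t => cube_norm (W t)) @ F --> cube_norm w.
Proof.
move=> hW; apply: (continuous_cvg _ (@sqrt_continuous R _)).
apply: (@cvg_sum_sqr _ (fun t i => 2 * W t i - 1)) => i.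
by apply: cvgB; [apply: cvgM => //; exact: cvg_cst|exact: cvg_cst].
Qed.

Lemma cube_ratio_le1 n (t : 'I_n.+1 -> R) j : `|(2 * t j - 1) / cube_norm t| <= 1.
Proof.
have [r0|r0] := eqVneq (cube_norm t) 0; first by rewrite r0 invr0 mulr0 normr0.
have rp : 0 < cube_norm t by rewrite lt_def r0 sqrtr_ge0.
rewrite normrM (gtr0_norm (x := (cube_norm t)^-1)) ?invr_gt0 //.
rewrite ler_pdivrMr // mul1r -sqrtr_sqr /cube_norm ler_sqrt ?sum_sqr_ge0 //.
by rewrite (bigD1 j) //= lerDl; apply: sumr_ge0 => i _; exact: sqr_ge0.
Qed.

(* At the centre of the cube the direction [(2 t - 1) / cube_norm t] is
   discontinuous, but it is multiplied by [sin (pi * cube_supnorm t)], which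
   tends to [0] there. *)
Lemma cvg_sph n k (W : T -> 'I_n.+1 -> R) w : coord_cvg W w ->
  coord_cvg (fun t => sph k (W t)) (sph k w).
Proof.
move=> hW i.
have hs : (fun t => pi * cube_supnorm (W t)) @ F --> pi * cube_supnorm w.
  by apply: cvgM; [exact: cvg_cst|exact: cvg_cube_supnorm].
case: (unliftP ord0 i) => [j|] ->; last first.
  rewrite sph_ord0; under eq_fun do rewrite sph_ord0.
  apply: cvgM; last exact: cvg_cst.
  by apply: cvgD; [exact: cvg_cst|exact: (continuous_cvg _ (@continuous_cos R _))].
rewrite sph_lift; under eq_fun do rewrite sph_lift.
apply: cvgM; last exact: cvg_cst.
have hsin : (fun t => sin (pi * cube_supnorm (W t))) @ F --> sin (pi * cube_supnorm w).
  exact: (continuous_cvg _ (@continuous_sin R _)).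
have [r0|r0] := eqVneq (cube_norm w) 0.
  have /cube_supnorm_eq0 s0 : \sum_i (2 * w i - 1) ^+ 2 = 0.
    by apply/eqP; rewrite eq_le -sqrtr_eq0 -/(cube_norm w) r0 eqxx sum_sqr_ge0.
  rewrite s0 mulr0 sin0 mul0r; apply: cvg0_mul_bounded => [|t]; last exact: cube_ratio_le1.
  by move: hsin; rewrite s0 mulr0 sin0.
apply: cvgM => //; apply: cvgM.
  by apply: cvgB; [apply: cvgM => //; exact: cvg_cst|exact: cvg_cst].
exact: cvgV r0 (cvg_cube_norm hW).
Qed.

Lemma cvg_upd0 n (W : T -> 'I_n.+1 -> R) w (a : T -> R) a0 :
  coord_cvg W w -> a @ F --> a0 -> coord_cvg (fun t => upd0 (W t) (a t)) (upd0 w a0).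
Proof. by move=> hW ha j; rewrite /upd0; case: (j == ord0). Qed.

Lemma cvg_clamp (z : T -> R) (z0 : R) : z @ F --> z0 ->
  (fun t => clamp (z t)) @ F --> clamp z0.
Proof.
move=> hz; rewrite /clamp minr_absE; under eq_fun do rewrite minr_absE.
have hmax : (fun t => Num.max (-1) (z t)) @ F --> Num.max (-1) z0.
  by apply: cvgr_max => //; exact: cvg_cst.
apply: cvgM; last exact: cvg_cst.
apply: cvgB; first by apply: cvgD => //; exact: cvg_cst.
by apply: cvg_norm; apply: cvgB => //; exact: cvg_cst.
Qed.

Lemma clamp_itv (z : R) : -1 <= clamp z <= 1.
Proof.
by rewrite /clamp le_min ge_min le_max !lexx /= andbT; lra.
Qed.

Lemma acos_lt (c e : R) : -1 <= c <= 1 -> 0 <= e <= pi -> cos e < c -> acos c < e.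
Proof.
move=> hc he; rewrite -[X in _ < X -> _](acosK (x := c)) ?in_itv //.
by rewrite ltr_cos // in_itv //= acos_ge0 ?acos_lepi.
Qed.

(* [acos] is only continuous inside [(-1, 1)]; at [1] we argue by monotonicity. *)
Lemma cvg_acos_clamp (z : T -> R) (z0 : R) : -1 < z0 <= 1 -> z @ F --> z0 ->
  (fun t => acos (clamp (z t))) @ F --> acos z0.
Proof.
move=> /andP[zl zr] hz; have [z1|z1] := ltP z0 1.
  have z0E : clamp z0 = z0 by rewrite clampE // (ltW zl) (ltW z1).
  rewrite -{1}z0E; apply: (continuous_cvg _ (continuous_acos _)); last exact: cvg_clamp.
  by rewrite z0E zl.
have z0E : z0 = 1 by apply/eqP; rewrite eq_le zr.
rewrite z0E acos1 in hz *; apply/cvgrPdist_lt => e e0.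
have pi0 : 0 < pi :> R := pi_gt0 R.
pose e' := Num.min e pi.
have e'0 : 0 < e' by rewrite lt_min e0.
have e'itv : 0 <= e' <= pi by rewrite (ltW e'0) ge_min lexx orbT.
have ce1 : cos e' < 1 by rewrite -cos0 ltr_cos ?in_itv //= ?lexx ?(ltW pi0).
move: (@cvgr_gt R T F FF z 1 hz _ ce1); apply: filterS => t zt.
rewrite sub0r normrN ger0_norm ?acos_ge0 ?clamp_itv //.
apply: (@lt_le_trans _ _ e'); last by rewrite /e' ge_min lexx.
apply: acos_lt => //; first exact: clamp_itv.
by rewrite /clamp lt_min ce1 lt_max zt orbT.
Qed.

Lemma cvg_sph_inv n k (Y : T -> amb R n) (y : amb R n) : (0 < k)%N -> onSphere k y ->
  y <> @origin R n -> coord_cvg Y y -> coord_cvg (fun t => sph_inv k (Y t)) (sph_inv k y).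
Proof.
move=> k0 hs hy hY j.
have hlevel : (fun t => sphere_level k (Y t)) @ F --> sphere_level k y.
  rewrite {2}/sphere_level (clampE (sphere_cos_itv k0 hs)).
  apply: cvgM; last exact: cvg_cst; apply: cvg_acos_clamp.
    by rewrite sphere_cos_gtN1 //=; case/andP: (sphere_cos_itv k0 hs).
  by apply: cvgB; [apply: cvgM => //; exact: cvg_cst|exact: cvg_cst].
rewrite /sph_inv; apply: cvgM; last exact: cvg_cst.
apply: cvgD; first exact: cvg_cst.
have [m0|m0] := eqVneq (tail_supnorm y) 0.
  rewrite sphere_level_tail0 // mul0r.
  apply: cvg0_mul_bounded => [|t]; last exact: tail_ratio_le1.
  by move: hlevel; rewrite sphere_level_tail0.
apply: cvgM => //; apply: cvgM => //; apply: cvgV m0 _.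
by apply: cvgr_bigmax => i; exact: cvg_norm.
Qed.

End coordinatewise_cvg.

Section dist_filter.
Context {R : realType}.

Definition dist_nbhs n (x : amb R n) : set_system (amb R n) :=
  filter_from [set e : R | 0 < e] (fun e => [set y | dist2 x y < e]).

#[global] Instance dist_nbhs_filter n (x : amb R n) : Filter (dist_nbhs x).
Proof.
apply: filter_from_filter; first by exists 1; rewrite /= ltr01.
move=> a b /= a0 b0; exists (Num.min a b); first by rewrite /= lt_min a0 b0.
by move=> y /=; rewrite lt_min => /andP[].
Qed.

Lemma le_dist2 n (x y : amb R n) i : (x i - y i) ^+ 2 <= dist2 x y.
Proof. by rewrite /dist2 (bigD1 i) //= lerDl; apply: sumr_ge0 => j _; exact: sqr_ge0. Qed.

Lemma dist_nbhs_coord n (x : amb R n) : coord_cvg (dist_nbhs x) id x.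
Proof.
move=> j; apply/cvgrPdist_lt => e e0; exists (e ^+ 2); first by rewrite /= exprn_gt0.
move=> y /= hy; have := le_dist2 x y j => h.
have : `|x j - y j| ^+ 2 < e ^+ 2 by rewrite real_normK ?num_real; lra.
by rewrite ltr_pXn2r // ?nnegrE ?normr_ge0 // ltW.
Qed.

Lemma coord_cvg_dist_nbhs {T : Type} (F : set_system T) {FF : Filter F} n
    (W : T -> amb R n) (w : amb R n) :
  coord_cvg F W w -> W @ F `=>` dist_nbhs w.
Proof.
move=> hW P [e /= e0 sP].
have : (fun t => dist2 w (W t)) @ F --> 0.
  have <- : \sum_i (w i - w i) ^+ 2 = 0 :> R.
    by rewrite big1 // => i _; rewrite subrr expr0n.
  apply: (cvg_sum_sqr (W := fun t i => w i - W t i)) => i.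
  by apply: cvgB => //; exact: cvg_cst.
by move=> /cvgr_lt /(_ e e0); apply: filterS => t; exact: sP.
Qed.

Lemma near_dist_scale n (x : amb R n) (c : R) (P : amb R n -> Prop) : 0 < c ->
  (\forall z \near dist_nbhs x, P z) ->
  \forall y \near dist_nbhs x, forall z, dist2 x z <= c * dist2 x y -> P z.
Proof.
move=> c0 [e /= e0 sP]; exists (e / c); first by rewrite /= divr_gt0.
move=> y /= hy z hz; apply: sP; rewrite /= (le_lt_trans hz) //.
by rewrite -ltr_pdivlMl // mulrC.
Qed.

Lemma near_neq n (x z : amb R n) : x <> z -> \forall y \near dist_nbhs x, y <> z.
Proof.
move=> xz; exists (dist2 x z) => [|y /= hy yz]; last by rewrite yz ltxx in hy.
apply: sum_sqr_gt0 => xz0; apply: xz; apply: funext => i.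
by apply/eqP; rewrite -subr_eq0; apply/eqP; exact: (congr1 (@^~ i) xz0).
Qed.

Lemma onSphere_sum_sqr n k (y : amb R n) : (0 < k)%N -> onSphere k y ->
  k%:R * \sum_i y i ^+ 2 = 2 * y ord0.
Proof.
move=> k0 hs; have kn := pnatr_neq0 (R := R) k0.
have := onSphereE k0 hs; rewrite big_ord_recl -/(tail_norm2 y) /sphere_cos => h.
apply: (mulfI kn); rewrite mulrA -expr2.
have -> : k%:R ^+ 2 * (y ord0 ^+ 2 + tail_norm2 y) = 2 * (k%:R * y ord0) by nra.
by ring.
Qed.

Lemma natr_dist_lt1 (a b : nat) : `|(a%:R : R) - b%:R| < 1 -> a = b.
Proof.
wlog ab : a b / (a <= b)%N.
  move=> W h; have [ab|ba] := leqP a b; first exact: W.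
  by apply/esym/W; [exact: ltnW|rewrite distrC].
rewrite distrC -natrB // ger0_norm ?ler0n // ltrn1 => h.
by apply/eqP; rewrite eqn_leq ab /= -subn_eq0; move: h; case: (b - a)%N.
Qed.

(* The spheres [S_k] of [H^(n+1)] are pairwise disjoint away from the origin, and
   [k * |y|^2 = 2 y_0] on [S_k] recovers [k] continuously. *)
Lemma near_onSphere n k (x : amb R n) : (0 < k)%N -> onSphere k x -> x <> @origin R n ->
  \forall y \near dist_nbhs x, inH y -> onSphere k y.
Proof.
move=> k0 hs x0; have hY := @dist_nbhs_coord n x.
set r := \sum_i x i ^+ 2.
have r0 : 0 < r by exact: sum_sqr_gt0.
have hr : (fun y : amb R n => \sum_i y i ^+ 2) @ dist_nbhs x --> r.
  exact: cvg_sum_sqr.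
have hk : (fun y : amb R n => 2 * y ord0 - k%:R * \sum_i y i ^+ 2) @ dist_nbhs x -->
    2 * x ord0 - k%:R * r.
  by apply: cvgB; apply: cvgM => //; (exact: cvg_cst || exact: hY).
rewrite /r (onSphere_sum_sqr k0 hs) subrr in hk.
have r2 : 0 < r / 2 by rewrite divr_gt0.
near=> y => -[kk kk0 hss].
have ry : r / 2 < \sum_i y i ^+ 2 by near: y; apply: cvgr_gt hr _ _; lra.
have hy : `|0 - (2 * y ord0 - k%:R * \sum_i y i ^+ 2)| < r / 2.
  by near: y; exact: cvgr_dist_lt.
have sy0 : 0 < \sum_i y i ^+ 2 by lra.
suff ek : kk = k by rewrite -ek.
apply: natr_dist_lt1; rewrite -(ltr_pM2r sy0) mul1r.
move: hy; rewrite sub0r normrN -(onSphere_sum_sqr kk0 hss) -mulrBl normrM.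
by rewrite (ger0_norm (ltW sy0)); lra.
Unshelve. all: by end_near.
Qed.

Lemma cvg_sph_upd0_inv n k (x : amb R n) (b : R) : (0 < k)%N -> onSphere k x ->
    x <> @origin R n ->
  (fun y => sph k (upd0 (sph_inv k y) (2 * sph_inv k y ord0 - b))) @ dist_nbhs x `=>`
  dist_nbhs (sph k (upd0 (sph_inv k x) (2 * sph_inv k x ord0 - b))).
Proof.
move=> k0 hs x0.
have hinv : coord_cvg (dist_nbhs x) (sph_inv k) (sph_inv k x).
  exact: cvg_sph_inv k0 hs x0 (@dist_nbhs_coord n x).
apply: coord_cvg_dist_nbhs; apply: cvg_sph; apply: cvg_upd0; first exact: hinv.
by apply: cvgB; [apply: cvgM; [exact: cvg_cst|exact: hinv]|exact: cvg_cst].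
Qed.

End dist_filter.

Section weak_join_continuity.
Context {R : realType} {Y : topologicalType}.

Lemma continuous_HinfP (f : Hinf R -> Y) : continuous f <-> forall V, open V ->
  (forall n (x : amb R n), inH x -> V (f (emb x)) ->
     \forall y \near dist_nbhs x, inH y -> V (f (emb y))) /\
  (V (f (theta R)) -> exists N, forall n, (N <= n)%N ->
     forall x : amb R n, inH x -> V (f (emb x))).
Proof.
split=> [cf V oV | hf].
  have [hnear htail] : Hopen (f @^-1` V) := (continuousP f).1 cf V oV.
  split => // n x xH Vx; have [e e0 he] := hnear n x xH Vx.
  by exists e => // y /= dy yH; exact: he.
apply/continuousP => V oV; have [hnear htail] := hf V oV; split => // n x xH Vx.
by have [e e0 he] := hnear n x xH Vx; exists e => // y yH dy; exact: he.
Qed.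

Lemma near_emb_comp (u : Hinf R -> Y) (V : set Y) n m (c : amb R n -> amb R m)
    (x : amb R n) : continuous u -> open V ->
  c @ dist_nbhs x `=>` dist_nbhs (c x) -> (forall y, inH (c y)) ->
  V (u (emb (c x))) -> \forall y \near dist_nbhs x, V (u (emb (c y))).
Proof.
move=> cu oV cc cH Vc.
have /cc hc := ((continuous_HinfP u).1 cu V oV).1 m (c x) (cH x) Vc.
near=> y; have : inH (c y) -> V (u (emb (c y))) by near: y; exact: hc.
by apply; exact: cH.
Unshelve. all: by end_near.
Qed.

Lemma origin_inH n : inH (@origin R n).
Proof. by rewrite -(@sph_cube_corner R n 1%N); exact: sph_inH. Qed.

End weak_join_continuity.

Section near_branch.
Context {R : realType} {T : Type} (F : set_system T) {FF : Filter F}.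
Variables (u : T -> R) (a c : R) (P : T -> Prop).
Hypothesis ua : u @ F --> a.

Lemma near_le_branch :
  (a <= c -> \forall t \near F, P t) -> \forall t \near F, u t <= c -> P t.
Proof.
move=> hP; have [ac|ca] := leP a c; first by near=> t => _; near: t; exact: hP.
near=> t => utc; have : c < u t by near: t; exact: cvgr_gt ua _ ca.
by rewrite ltNge utc.
Unshelve. all: by end_near.
Qed.

Lemma near_ge_branch :
  (c <= a -> \forall t \near F, P t) -> \forall t \near F, c <= u t -> P t.
Proof.
move=> hP; have [ca|ac] := leP c a; first by near=> t => _; near: t; exact: hP.
near=> t => ctu; have : u t < c by near: t; exact: cvgr_lt ua _ ac.
by rewrite ltNge ctu.
Unshelve. all: by end_near.
Qed.

End near_branch.

Section concatenation.
Context {R : realType}.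

Definition concat_left n k (y : amb R n) :=
  sph k (upd0 (sph_inv k y) (2 * sph_inv k y ord0)).
Definition concat_right n k (y : amb R n) :=
  sph k (upd0 (sph_inv k y) (2 * sph_inv k y ord0 - 1)).

Variables (Y : topologicalType) (y0 : Y) (f g h : Hinf R -> Y).
Hypotheses (bf : based y0 f) (bg : based y0 g) (fgh : concat f g h).

Lemma concat_theta : h (theta R) = y0.
Proof.
have ut0 : unitI (fun _ : 'I_1 => 0 : R) by move=> i; rewrite lexx ler01.
have := @fgh 0%N 1%N (fun _ => 0) isT ut0.
have -> : upd0 (fun _ : 'I_1 => 0 : R) (2 * 0) = (fun _ => 0).
  by apply: funext => i; rewrite /upd0 mulr0; case: ifP.
by rewrite sph_cube_corner emb_origin invr_ge0 ler0n bf.2.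
Qed.

Lemma concat_leftE n k (y : amb R n) : (0 < k)%N -> onSphere k y -> y <> @origin R n ->
  sph_inv k y ord0 <= 2^-1 -> h (emb y) = f (emb (concat_left k y)).
Proof.
by move=> k0 hs y0' hy; rewrite -{1}(sph_invK k0 hs y0') fgh ?hy //; exact: unitI_sph_inv.
Qed.

(* At [t_0 = 1/2] both halves meet at the base point, since [f] and [g] are based. *)
Lemma concat_rightE n k (y : amb R n) : (0 < k)%N -> onSphere k y -> y <> @origin R n ->
  2^-1 <= sph_inv k y ord0 -> h (emb y) = g (emb (concat_right k y)).
Proof.
move=> k0 hs y0' hy; have ut := unitI_sph_inv k0 hs.
rewrite -{1}(sph_invK k0 hs y0') fgh //; case: ifPn => // hy'.
have t0E : sph_inv k y ord0 = 2^-1 by apply/eqP; rewrite eq_le hy' hy.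
rewrite /concat_right t0E mulfV // subrr !sph_upd0_face //; try by [left|right].
by rewrite !emb_origin bf.2 bg.2.
Qed.

Lemma concat_near_origin n (V : set Y) : open V -> V y0 ->
  \forall y \near dist_nbhs (@origin R n), inH y -> V (h (emb y)).
Proof.
move=> oV Vy0.
have near_origin (u : Hinf R -> Y) : based y0 u ->
    \forall y \near dist_nbhs (@origin R n), inH y -> V (u (emb y)).
  move=> [cu u0]; apply: ((continuous_HinfP u).1 cu V oV).1; first exact: origin_inH.
  by rewrite emb_origin u0.
have hf := near_dist_scale (c := 4) ltac:(lra) (near_origin f bf).
have hg := near_dist_scale (c := 4) ltac:(lra) (near_origin g bg).
near=> y => yH.
have Hf : forall z, dist2 (@origin R n) z <= 4 * dist2 (@origin R n) y ->
  inH z -> V (f (emb z)) by near: y; exact: hf.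
have Hg : forall z, dist2 (@origin R n) z <= 4 * dist2 (@origin R n) y ->
  inH z -> V (g (emb z)) by near: y; exact: hg.
have [->|y0'] := pselect (y = @origin R n); first by rewrite emb_origin concat_theta.
have [k k0 hs] := yH; have ut := unitI_sph_inv k0 hs.
have [hy|/ltW hy] := leP (sph_inv k y ord0) 2^-1.
  rewrite (concat_leftE k0 hs y0' hy); apply: Hf; last exact: sph_inH.
  by apply: le_trans (dist2_origin_concat_left (n := n) k0 ut hy) _; rewrite sph_invK.
rewrite (concat_rightE k0 hs y0' hy); apply: Hg; last exact: sph_inH.
by apply: le_trans (dist2_origin_concat_right (n := n) k0 ut hy) _; rewrite sph_invK.
Unshelve. all: by end_near.
Qed.

Lemma concat_near_point n k (x : amb R n) (V : set Y) : (0 < k)%N -> onSphere k x ->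
  x <> @origin R n -> open V -> V (h (emb x)) ->
  \forall y \near dist_nbhs x, inH y -> V (h (emb y)).
Proof.
move=> k0 hs x0 oV Vx.
have hinv0 : (fun y => sph_inv k y ord0) @ dist_nbhs x --> sph_inv k x ord0.
  exact: cvg_sph_inv k0 hs x0 (@dist_nbhs_coord _ n x) ord0.
have hL : \forall y \near dist_nbhs x,
    sph_inv k y ord0 <= 2^-1 -> V (f (emb (concat_left k y))).
  apply: near_le_branch hinv0 _ => hx.
  have := cvg_sph_upd0_inv (b := 0) k0 hs x0.
  under eq_fun do rewrite subr0; rewrite subr0 => cl.
  apply: near_emb_comp bf.1 oV cl _ _; first by move=> y; exact: sph_inH.
  by rewrite -(concat_leftE k0 hs x0 hx).
have hR : \forall y \near dist_nbhs x,
    2^-1 <= sph_inv k y ord0 -> V (g (emb (concat_right k y))).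
  apply: near_ge_branch hinv0 _ => hx.
  apply: near_emb_comp bg.1 oV (cvg_sph_upd0_inv (b := 1) k0 hs x0) _ _.
    by move=> y; exact: sph_inH.
  by rewrite -(concat_rightE k0 hs x0 hx).
near=> y => yH.
have hsy : inH y -> onSphere k y by near: y; exact: near_onSphere.
have y0' : y <> @origin R n by near: y; exact: near_neq.
have HL : sph_inv k y ord0 <= 2^-1 -> V (f (emb (concat_left k y))) by near: y.
have HR : 2^-1 <= sph_inv k y ord0 -> V (g (emb (concat_right k y))) by near: y.
have [hy|/ltW hy] := leP (sph_inv k y ord0) 2^-1.
  by rewrite (concat_leftE k0 (hsy yH) y0' hy); exact: HL.
by rewrite (concat_rightE k0 (hsy yH) y0' hy); exact: HR.
Unshelve. all: by end_near.
Qed.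

Lemma concat_tail (V : set Y) : open V -> V (h (theta R)) ->
  exists N, forall n, (N <= n)%N -> forall x : amb R n, inH x -> V (h (emb x)).
Proof.
move=> oV; rewrite concat_theta => Vy0.
have [_ /(_ _)[|Nf hNf]] := (continuous_HinfP f).1 bf.1 V oV; first by rewrite bf.2.
have [_ /(_ _)[|Ng hNg]] := (continuous_HinfP g).1 bg.1 V oV; first by rewrite bg.2.
exists (maxn Nf Ng) => n; rewrite geq_max => /andP[nf ng] x xH.
have [->|x0] := pselect (x = @origin R n); first by rewrite emb_origin concat_theta.
have [k k0 hs] := xH.
have [hx|/ltW hx] := leP (sph_inv k x ord0) 2^-1.
  by rewrite (concat_leftE k0 hs x0 hx); apply: hNf => //; exact: sph_inH.
by rewrite (concat_rightE k0 hs x0 hx); apply: hNg => //; exact: sph_inH.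
Qed.

Lemma concat_based : based y0 h.
Proof.
split; last exact: concat_theta.
apply/continuous_HinfP => V oV; split; last exact: concat_tail.
move=> n x xH Vx; have [x0|x0] := pselect (x = @origin R n).
  rewrite x0; apply: concat_near_origin oV _.
  by move: Vx; rewrite x0 emb_origin concat_theta.
by have [k k0 hs] := xH; exact: concat_near_point k0 hs x0 oV Vx.
Qed.

End concatenation.

Section based_maps.
Context {R : realType} {Y : topologicalType}.

Lemma concat_uniq (f g h h' : Hinf R -> Y) : concat f g h -> concat f g h' -> h = h'.
Proof.
move=> fgh fgh'; apply: funext => p.
have [n [k [t [k0 ut ->]]]] := emb_sph_surj p.
by rewrite (fgh _ _ _ k0 ut) (fgh' _ _ _ k0 ut).
Qed.

Lemma homotopic_refl (y0 : Y) (f : Hinf R -> Y) : based y0 f -> homotopic y0 f f.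
Proof.
move=> [cf f0]; exists (fun q => f q.1); split => //.
by apply: continuous_subspaceT => q; apply: continuous_comp; [exact: cvg_fst|exact: cf].
Qed.

End based_maps.

Section product.
Context {R : realType} (I : Type) (X : I -> topologicalType) (x : forall i, X i).

Lemma cvg_prod_topology (T : Type) (F : set_system T) {FF : Filter F}
    (u : T -> prod_topology X) (v : prod_topology X) :
  (forall i, (fun t => u t i) @ F --> v i) -> u @ F --> v.
Proof.
move=> uv; apply/cvg_sup => i; apply/(@cvg_image _ _ (fun w : prod_topology X => w i)).
  rewrite eqEsubset; split => // y _.
  by exists (@dfwith {classic I} X v i y) => //; rewrite /= dfwithin.
move=> B /= hB; exists ((fun w : prod_topology X => w i) @^-1` B); first exact: uv.
rewrite eqEsubset; split => [y [w Bw <-] //|y By].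
by exists (@dfwith {classic I} X v i y); rewrite /= dfwithin.
Qed.

Lemma prod_topology_ext (u v : prod_topology X) : (forall i, u i = v i) -> u = v.
Proof. exact: functional_extensionality_dep. Qed.

Lemma continuous_proj i : continuous (fun w : prod_topology X => w i).
Proof. exact: (@proj_continuous {classic I} X i). Qed.

Lemma based_proj (f : Hinf R -> prod_topology X) i :
  based (x : prod_topology X) f -> based (x i) (fun p => f p i).
Proof.
move=> [cf f0]; split => [p|]; last by rewrite f0.
exact: continuous_comp (cf p) (@continuous_proj i (f p)).
Qed.

Lemma based_tuple (gam : forall i, Hinf R -> X i) : (forall i, based (x i) (gam i)) ->
  based (x : prod_topology X) (fun p i => gam i p).
Proof.
move=> bgam; split => [p|]; last by apply: prod_topology_ext => i; exact: (bgam i).2.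
by apply: cvg_prod_topology => [|i]; [exact: nbhs_filter|exact: (bgam i).1].
Qed.

Lemma homotopic_prodP (f g : Hinf R -> prod_topology X) :
  homotopic (x : prod_topology X) f g <->
  forall i, homotopic (x i) (fun p => f p i) (fun p => g p i).
Proof.
split=> [[H [cH H0 H1 Hx]] i|hi].
  exists (fun q => H q i); split => [q||p|s hs]; last by rewrite Hx.
  - exact: continuous_comp (cH q) (@continuous_proj i (H q)).
  - by move=> p; rewrite H0.
  - by rewrite H1.
pose H i := projT1 (cid (hi i)); have hH i := projT2 (cid (hi i)).
exists (fun q i => H i q); split => [q|p|p|s hs].
- by apply: cvg_prod_topology => i; have [c _ _ _] := hH i; exact: c.
- by apply: prod_topology_ext => i; have [_ c _ _] := hH i; exact: c.
- by apply: prod_topology_ext => i; have [_ _ c _] := hH i; exact: c.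
- by apply: prod_topology_ext => i; have [_ _ _ c] := hH i; exact: c.
Qed.

Lemma concat_proj (f g h : Hinf R -> prod_topology X) i : concat f g h ->
  concat (fun p => f p i) (fun p => g p i) (fun p => h p i).
Proof. by move=> fgh n k t k0 ut; rewrite fgh //; case: ifP. Qed.

End product.

Theorem theorem3p4 (I : Type) (X : I -> topologicalType) (x : forall i, X i) :
  exists Phi : (Hinf Rdefinitions.R -> prod_topology X) ->
               forall i, Hinf Rdefinitions.R -> X i,
  [/\ forall f, based (x : prod_topology X) f ->
        forall i, based (x i) (Phi f i),
      forall f g, based (x : prod_topology X) f -> based (x : prod_topology X) g ->
        (homotopic (x : prod_topology X) f g <->
         forall i, homotopic (x i) (Phi f i) (Phi g i)),
      forall gam : forall i, Hinf Rdefinitions.R -> X i,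
        (forall i, based (x i) (gam i)) ->
        exists2 f, based (x : prod_topology X) f &
          forall i, homotopic (x i) (Phi f i) (gam i) &
      forall f g h (k : forall i, Hinf Rdefinitions.R -> X i),
        based (x : prod_topology X) f -> based (x : prod_topology X) g ->
        concat f g h -> (forall i, concat (Phi f i) (Phi g i) (k i)) ->
        forall i, homotopic (x i) (Phi h i) (k i)].
Proof.
exists (fun f i p => f p i); split.
- by move=> f bf i; exact: based_proj.
- by move=> f g _ _; exact: homotopic_prodP.
- move=> gam bgam; exists (fun p i => gam i p); first exact: based_tuple.
  by move=> i; exact: homotopic_refl.
- move=> f g h k bf bg fgh fgk i.
  rewrite (concat_uniq (concat_proj i fgh) (fgk i)).
  exact: homotopic_refl (concat_based (based_proj _ bf) (based_proj _ bg) (fgk i)).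
Qed.
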